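(* Let $\mathbf{A}\in\mathbb{R}^{(\ell m)\times(qn)}$ be a block matrix with $\ell\times q$ blocks of size $m\times n$, and let $\mathbf{B}=\mathbf{S}_{\ell,m}\mathbf{A}\mathbf{S}_{q,n}^\top$, viewed as an $m\times n$ grid of blocks of size $\ell\times q$. Let $\mathscr{A}\subseteq\mathbb{R}^{m\times n}$ be the span of the blocks of $\mathbf{A}$ and $\mathscr{B}\subseteq\mathbb{R}^{\ell\times q}$ the span of the blocks of $\mathbf{B}$. Then $\dim(\mathscr{A})=\dim(\mathscr{B})$.
   Context: Blocks of $\mathbf{A}$: $\mathbf{A}^{(\gamma,\delta)}_{\alpha\beta}=\mathbf{A}_{(\gamma-1)m+\alpha,(\delta-1)n+\beta}$ for $(\gamma,\delta)\in[\ell]\times[q]$, $(\alpha,\beta)\in[m]\times[n]$. Blocks of $\mathbf{B}$: $\mathbf{B}^{(\alpha,\beta)}_{\gamma\delta}=\mathbf{B}_{(\alpha-1)\ell+\gamma,(\beta-1)q+\delta}$. For $a,b\ge 1$ and $s=ab$, the shuffle permutation matrix $\mathbf{S}_{a,b}\in\mathbb{R}^{s\times s}$ has row $(i-1)a+j$ equal to $\mathbf{e}_{(j-1)b+i}^\top$ for $i\in[b]$, $j\in[a]$ (the rows of $\mathbf{I}_s$ with indices $i,i+b,\dots,i+(a-1)b$, stacked for $i=1,\dots,b$). In the paper's terminology, $\mathscr{A}$ (spanned by the distinct blocks of $\mathbf{A}$) is the inner blockspan and $\mathscr{B}$ (spanned by the distinct blocks of $\mathbf{B}$) is the outer blockspan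 of $\mathbf{A}$. *)

From HB Require Import structures.
From mathcomp Require Import all_boot all_order all_algebra.
From mathcomp Require Import Rstruct.
From Stdlib Require Rdefinitions.
Notation R := Rdefinitions.R.
Set Implicit Arguments. Unset Strict Implicit. Unset Printing Implicit Defensive.
Import GRing.Theory.
Local Open Scope ring_scope.

(* Shuffle permutation matrix S_{a,b} (0-indexed): row i*a+j (i<b, j<a)
   is e_{j*b+i}^T.  For r = i*a + j we have j = r %% a and i = r %/ a. *)
Definition shuffle_mx (a b : nat) : 'M[R]_(a * b) :=
  \matrix_(r < a * b, c < a * b) ((nat_of_ord c == (r %% a) * b + r %/ a)%N)%:R.

Lemma blk_idx_lt (p r : nat) (i : 'I_p) (x : 'I_r) : (i * r + x < p * r)%N.
Proof.
have Hi := ltn_ord i; have Hx := ltn_ord x.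
apply: (@leq_trans (i * r + r)); first by rewrite ltn_add2l.
by rewrite addnC -mulSn leq_mul2r Hi orbT.
Qed.

Lemma blk_idx_lt' (p r : nat) (i : 'I_p) (x : 'I_r) : (i * r + x < r * p)%N.
Proof. by rewrite [(r * p)%N]mulnC blk_idx_lt. Qed.

Definition blockA (l m q n : nat) (M : 'M[R]_(l * m, q * n)) (g : 'I_l) (d : 'I_q)
  : 'M[R]_(m, n) :=
  \matrix_(a < m, b < n) M (Ordinal (blk_idx_lt g a)) (Ordinal (blk_idx_lt d b)).

Definition blockB (l m q n : nat) (M : 'M[R]_(l * m, q * n)) (a : 'I_m) (b : 'I_n)
  : 'M[R]_(l, q) :=
  \matrix_(g < l, d < q) M (Ordinal (blk_idx_lt' a g)) (Ordinal (blk_idx_lt' b d)).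

Definition inner_blockspan (l m q n : nat) (M : 'M[R]_(l * m, q * n))
  : {vspace 'M[R]_(m, n)} :=
  <<[seq blockA M g d | g <- enum 'I_l, d <- enum 'I_q]>>%VS.

Definition outer_blockspan (l m q n : nat) (M : 'M[R]_(l * m, q * n))
  : {vspace 'M[R]_(l, q)} :=
  <<[seq blockB M a b | a <- enum 'I_m, b <- enum 'I_n]>>%VS.

(* Both spans are read off one coefficient matrix C, indexed by block
   positions (g, d) and in-block positions (a, b): C_{(g,d),(a,b)} is entry
   (a, b) of block (g, d) of A.  The two shuffles exchange the roles of the
   outer and inner indices, so entry (g, d) of block (a, b) of B is the same
   number.  Hence dim A-span is the rank of C and dim B-span the rank of C^T. *)

From HB Require Import structures.
From mathcomp Require Import all_boot all_order all_algebra.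
From mathcomp Require Import Rstruct zify.
Set Implicit Arguments. Unset Strict Implicit. Unset Printing Implicit Defensive.
Import GRing.Theory.
Import VectorInternalTheory.
Local Open Scope ring_scope.

Section SpanRank.
Variable K : fieldType.

Lemma mxrank_map_rows_inj k1 k2 N (F : {linear 'rV[K]_k1 -> 'rV[K]_k2})
  (M : 'M[K]_(N, k1)) :
  injective F -> \rank (\matrix_i F (row i M)) = \rank M.
Proof.
move=> injF.
have -> : \matrix_i F (row i M) = M *m lin1_mx F.
  by apply/row_matrixP => i; rewrite rowK row_mul mul_rV_lin1.
apply: mxrankMfree; apply: inj_row_free => v.
by rewrite mul_rV_lin1 -(linear0 F) => /injF.
Qed.

Variable vT : vectType K.

(* [memvK] of vector.v, which is only a local [Let] there. *)
Lemma memv_v2r (v : vT) (U : {vspace vT}) : (v \in U) = (v2r v <= vs2mx U)%MS.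
Proof. by rewrite -genmxE. Qed.

Lemma dimv_span_codom (I : finType) (f : I -> vT) (X : seq vT) :
  X =i codom f -> \dim <<X>> = \rank (\matrix_(i < #|I|) v2r (f (enum_val i))).
Proof.
set M := \matrix_(i < #|I|) _ => eqX.
suff -> : <<X>>%VS = mx2vs M by rewrite /dimv genmxE.
apply/eqP; rewrite eqEsubv; apply/andP; split.
- apply/span_subvP => x; rewrite eqX => /codomP[i ->].
  rewrite memv_v2r genmxE.
  by have := row_sub (enum_rank i) M; rewrite rowK enum_rankK.
- rewrite /subsetv genmxE; apply/row_subP => j.
  by rewrite rowK -memv_v2r memv_span // eqX codom_f.
Qed.

Lemma dimv_span_coord k (phi : {linear vT -> 'rV[K]_k}) (I : finType)
  (f : I -> vT) (X : seq vT) :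
  injective phi -> X =i codom f ->
  \dim <<X>> = \rank (\matrix_(i < #|I|) phi (f (enum_val i))).
Proof.
move=> injphi /dimv_span_codom ->.
have injF : injective (phi \o r2v) := inj_comp injphi (@r2v_inj _ vT).
rewrite -(mxrank_map_rows_inj _ injF).
by congr mxrank; apply/row_matrixP => i; rewrite !rowK /= v2rK.
Qed.

End SpanRank.

Section MatrixEntries.
Variables (K : fieldType) (m n : nat).

Definition mxentries (Y : 'M[K]_(m, n)) : 'rV[K]_#|{: 'I_m * 'I_n}| :=
  \row_k Y (enum_val k).1 (enum_val k).2.

Fact mxentries_is_linear : linear mxentries.
Proof. by move=> a Y Z; apply/rowP => k; rewrite !mxE. Qed.

HB.instance Definition _ :=
  GRing.isLinear.Build K 'M[K]_(m, n) 'rV[K]_#|{: 'I_m * 'I_n}| _ mxentries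
    mxentries_is_linear.

Lemma mxentries_inj : injective mxentries.
Proof.
move=> Y Z /rowP eqYZ; apply/matrixP => i j.
by have := eqYZ (enum_rank (i, j)); rewrite !mxE enum_rankK.
Qed.

End MatrixEntries.

Lemma mem_allpairs_enum (T1 T2 : finType) (T : eqType) (F : T1 -> T2 -> T) :
  [seq F x y | x <- enum T1, y <- enum T2]
    =i codom (fun p : T1 * T2 => F p.1 p.2).
Proof.
move=> z; apply/allpairsP/codomP => [[[x y] [_ _ ->]] | [[x y] ->]].
  by exists (x, y).
by exists (x, y); rewrite !mem_enum.
Qed.

Section Shuffle.
Variables a b : nat.

Lemma shuffle_index_lt (r : 'I_(a * b)) : (r %% a * b + r %/ a < a * b)%N.
Proof.
have a_gt0 : (0 < a)%N by case: a r => [[]|].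
have : (r %/ a < b)%N by rewrite ltn_divLR // [(b * a)%N]mulnC.
have : (r %% a < a)%N by rewrite ltn_mod.
nia.
Qed.

Definition shuffle_ord (r : 'I_(a * b)) : 'I_(a * b) :=
  Ordinal (shuffle_index_lt r).

Lemma shuffle_ord_block (i : 'I_b) (j : 'I_a) :
  shuffle_ord (Ordinal (blk_idx_lt' i j)) = Ordinal (blk_idx_lt j i).
Proof.
have a_gt0 : (0 < a)%N := leq_ltn_trans (leq0n j) (ltn_ord j).
apply: val_inj => /=.
by rewrite modnMDl modn_small // divnMDl // divn_small // addn0.
Qed.

Lemma shuffle_mx_mulE k (M : 'M[R]_(a * b, k)) r c :
  (shuffle_mx a b *m M) r c = M (shuffle_ord r) c.
Proof.
rewrite mxE (bigD1 (shuffle_ord r)) //= big1 ?addr0.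
  by rewrite mxE eqxx mul1r.
move=> i ne_i_r; rewrite mxE; case: eqP => [eq_i_r|]; last by rewrite mul0r.
by case/eqP: ne_i_r; apply: val_inj.
Qed.

Lemma mulmx_shuffle_mx_trE k (M : 'M[R]_(k, a * b)) r c :
  (M *m (shuffle_mx a b)^T) r c = M r (shuffle_ord c).
Proof. by rewrite -[M *m _]trmxK trmx_mul trmxK mxE shuffle_mx_mulE mxE. Qed.

End Shuffle.

Lemma blockB_shuffle l m q n (A : 'M[R]_(l * m, q * n)) a b g d :
  blockB (shuffle_mx l m *m A *m (shuffle_mx q n)^T) a b g d = blockA A g d a b.
Proof.
by rewrite [LHS]mxE mulmx_shuffle_mx_trE shuffle_mx_mulE !shuffle_ord_block mxE.
Qed.

Theorem theorem2 (l m q n : nat) (Hl : (0 < l)%N) (Hm : (0 < m)%N)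
  (Hq : (0 < q)%N) (Hn : (0 < n)%N) (A : 'M[R]_(l * m, q * n)) :
  let B := shuffle_mx l m *m A *m (shuffle_mx q n)^T in
  \dim (inner_blockspan A) = \dim (outer_blockspan B).
Proof.
move=> B.
rewrite /inner_blockspan /outer_blockspan.
rewrite !(dimv_span_coord (@mxentries_inj _ _ _) (mem_allpairs_enum _)).
rewrite -mxrank_tr.
congr mxrank; apply/matrixP => i k.
by rewrite mxE 2![LHS]mxE 2![RHS]mxE blockB_shuffle.
Qed.
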